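(* Let $n\ge 2$, let $P=(P_1,\dots,P_t)$ be a partition of $\{1,\dots,n+1\}$, $n_i=|P_i|$, and ${\cal K}={\cal K}(P)$. Then: (ii) $Cox({\cal K})$ is isomorphic to $\prod_{i=1}^t Sym(1+n_i)$, so its order is $\prod_{i=1}^t (n_i+1)!$; (iii) $Cox({\cal K})=Aut({\cal K})$ if and only if the parts of $P$ have pairwise different sizes; (iv) $Cox({\cal K})$ acts transitively on the $n$-faces of ${\cal K}$.
   Context: For a partition $P=(P_1,\dots,P_t)$ of $\{1,\dots,n+1\}$, ${\cal K}(P)$ is the simplicial complex on the vertex set $\{1,\dots,n+1\}\cup\{p_1,\dots,p_t\}$ ($t$ new vertices) whose $n$-faces are the sets $\{y_1,\dots,y_{n+1}\}$ with, for each $i$, $y_i=i$ or $y_i=p_j$ where $i\in P_j$, subject to the $y_i$ being pairwise distinct; its faces are all nonempty subsets of these. $Aut({\cal K})$ is the group of permutations of the vertices of ${\cal K}$ mapping the set of faces onto itself. For $i\in\{1,\dots,n+1\}$ with $i\in P_j$, let $g_i$ be the permutation of the vertex set of ${\cal K}(P)$ exchanging $i$ and $p_j$ and fixing all other vertices (this is the ''reflection'' of the facet $\{1,\dots,n+1\}$ across its $(n-1)$-face $\{1,\dots,n+1\}\setminus\{i\}$, and is an automorphism of ${\cal K}(P)$). $Cox({\cal K})$ is the subgroup of $Aut({\cal K})$ generated by $g_1,\dots,g_{n+1}$. *)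

From HB Require Import structures.
From mathcomp Require Import all_boot all_fingroup.
Set Implicit Arguments. Unset Strict Implicit. Unset Printing Implicit Defensive.

(* The vertices 1..n+1 are encoded as 'I_n.+1 (vertex i+1 <-> ordinal i);
   the ordered partition P = (P_1,...,P_t) of {1..n+1} is encoded by its
   block-labelling map f : 'I_n.+1 -> 'I_t (i lies in P_(f i)), required to
   be surjective (all blocks nonempty).  The new vertices p_1..p_t are inr j. *)
Definition vert (n t : nat) := ('I_n.+1 + 'I_t)%type.

Definition yv (n t : nat) (f : 'I_n.+1 -> 'I_t) (c : {ffun 'I_n.+1 -> bool})
  (i : 'I_n.+1) : vert n t := if c i then inr (f i) else inl i.

Definition is_nface (n t : nat) (f : 'I_n.+1 -> 'I_t) (S : {set vert n t}) : bool :=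
  [exists c : {ffun 'I_n.+1 -> bool},
     injectiveb (yv f c) && (S == [set yv f c i | i : 'I_n.+1])].

Definition is_face (n t : nat) (f : 'I_n.+1 -> 'I_t) (S : {set vert n t}) : bool :=
  (S != set0) && [exists F : {set vert n t}, is_nface f F && (S \subset F)].

Definition AutK (n t : nat) (f : 'I_n.+1 -> 'I_t) : {set {perm vert n t}} :=
  [set g : {perm vert n t} | [forall S : {set vert n t}, is_face f (g @: S) == is_face f S]].

Definition gen (n t : nat) (f : 'I_n.+1 -> 'I_t) (i : 'I_n.+1) : {perm vert n t} :=
  tperm (inl i) (inr (f i)).

Definition CoxK (n t : nat) (f : 'I_n.+1 -> 'I_t) : {set {perm vert n t}} :=
  <<[set gen f i | i : 'I_n.+1]>>%g.

Definition part_size (n t : nat) (f : 'I_n.+1 -> 'I_t) (j : 'I_t) : nat :=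
  #|[set i : 'I_n.+1 | f i == j]|.

(* prod_{j} Sym(1+n_j), realised as the permutations of the disjoint union
   of the sets {0..n_j} (j < t) that preserve each summand. *)
Definition prodSym_type (n t : nat) (f : 'I_n.+1 -> 'I_t) : finType :=
  {j : 'I_t & 'I_(part_size f j).+1}.

Definition ProdSym (n t : nat) (f : 'I_n.+1 -> 'I_t) : {set {perm prodSym_type f}} :=
  [set s : {perm prodSym_type f} | [forall x, tag (s x) == tag x]].

From HB Require Import structures.
From mathcomp Require Import all_boot all_fingroup.
Set Implicit Arguments. Unset Strict Implicit. Unset Printing Implicit Defensive.
Import GroupScope.

(* Group the vertices of K(P) into the blocks B_j = P_j + {p_j}.  A nonempty
   vertex set is a face iff it contains no whole block.  Conjugating g_i by
   g_i' (i, i' in the same part) gives the transposition of i and i', so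
   Cox(K) contains every transposition inside a block and is therefore the
   group of all block-preserving permutations, i.e. the product of the
   Sym(B_j).  Block-preserving permutations preserve faces and move any
   n-face to any other.  Conversely, an automorphism maps each block, a
   minimal non-face, onto a block; so Aut(K) = Cox(K) exactly when no two
   blocks have the same size, and otherwise a bijection exchanging two blocks
   of equal size is an automorphism outside Cox(K). *)

Lemma perm_imsetM (T : finType) (g h : {perm T}) (A : {set T}) :
  (g * h) @: A = h @: (g @: A).
Proof. by rewrite -imset_comp; apply: eq_imset => x; rewrite /= permM. Qed.

Lemma perm_imsetK (T : finType) (g : {perm T}) (A : {set T}) : g^-1 @: (g @: A) = A.
Proof. by rewrite -imset_comp (eq_imset _ (permK g)) imset_id. Qed.

Lemma perm_imsetS (T : finType) (g : {perm T}) (A B : {set T}) :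
  (g @: A \subset g @: B) = (A \subset B).
Proof. by apply/idP/idP => [/(imsetS g^-1)|]; rewrite ?perm_imsetK //; apply: imsetS. Qed.

Section FiberPerm.
Variables (T : finType) (U : eqType) (b : T -> U).

Definition fiber (u : U) : {set T} := [set x | b x == u].

Lemma mem_fiber x : x \in fiber (b x).
Proof. by rewrite inE. Qed.

Definition fiber_perm : {set {perm T}} := [set g : {perm T} | [forall x, b (g x) == b x]].

Lemma fiber_permP (g : {perm T}) :
  reflect (forall x, b (g x) = b x) (g \in fiber_perm).
Proof. by rewrite inE; apply: (iffP forallP) => g_b x; apply/eqP. Qed.

Lemma group_set_fiber_perm : group_set fiber_perm.
Proof.
apply/group_setP; split; first by apply/fiber_permP => x; rewrite perm1.
move=> g h /fiber_permP g_b /fiber_permP h_b.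
by apply/fiber_permP => x; rewrite permM h_b g_b.
Qed.

Canonical fiber_perm_group := Group group_set_fiber_perm.

Lemma fiber_perm_sub (G : {group {perm T}}) :
  (forall x y, b x = b y -> tperm x y \in G) -> fiber_perm \subset G.
Proof.
move=> tpermG; apply/subsetP => g.
have [m] := ubnP #|[pred x | g x != x]|; elim: m g => // m IHm g /ltnSE-le_g_m gB.
case: (pickP (fun x => g x != x)) => [x gx | g_id]; last first.
  suff -> : g = 1 by rewrite group1.
  by apply/permP => x; apply/eqP/idPn; rewrite perm1 g_id.
have /fiber_permP g_b := gB.
have b_gVx : b x = b (g^-1 x) by rewrite -{1}(permKV g x) g_b.
(* composing with the fiber transposition (x, g^-1 x) fixes x *)
have -> : g = tperm x (g^-1 x) * (tperm x (g^-1 x) * g) by rewrite mulgA tperm2 mul1g.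
apply: groupM; first exact: tpermG.
apply: IHm; last by apply/fiber_permP => y; rewrite permM g_b; case: tpermP => // ->.
rewrite (cardD1 x) !inE gx in le_g_m; apply: leq_ltn_trans le_g_m.
apply: subset_leq_card; apply/subsetP => y.
rewrite !inE permM permE /= -(canF_eq (permK _)).
have [-> | ne_yx] := eqVneq y x; first by rewrite permKV eqxx.
by case: (g y =P x) => // -> _; rewrite eq_sym.
Qed.

End FiberPerm.

Lemma fiber_transport (U T T' : finType) (b : T -> U) (b' : T' -> U) (tau : U -> U) :
  injective tau -> (forall u, #|fiber b u| = #|fiber b' (tau u)|) ->
  exists2 e : T -> T', injective e & forall x, b' (e x) = tau (b x).
Proof.
move=> tau_inj card_b.
pose rank (x : T) := Tagged (fun u => 'I_#|fiber b u|) (enum_rank_in (mem_fiber b x) x).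
pose relabel (y : {u : U & 'I_#|fiber b u|}) :=
  Tagged (fun u => 'I_#|fiber b' u|) (cast_ord (card_b (tag y)) (tagged y)).
pose unrank (y : {u : U & 'I_#|fiber b' u|}) := enum_val (tagged y).
have unrank_tag y : b' (unrank y) = tag y.
  by have := enum_valP (tagged y); rewrite inE => /eqP.
exists (unrank \o relabel \o rank) => [|x]; last by rewrite /= unrank_tag.
apply: inj_comp; last first.
  apply: (can_inj (g := fun y => enum_val (tagged y))) => x.
  by rewrite /= enum_rankK_in ?inE.
apply: inj_comp => [[u i] [u' i'] /= eq_unrank | [u i] [u' i'] /= eq_relabel].
  have eq_u : u = u'.
    move: (unrank_tag (Tagged _ i)) (unrank_tag (Tagged _ i')).
    by rewrite eq_unrank /= => <-.
  by subst u'; rewrite (enum_val_inj eq_unrank : i = i').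
have eq_u : u = u' by apply: tau_inj; apply: (congr1 tag eq_relabel).
by subst u'; rewrite (cast_ord_inj (eq_from_Tagged eq_relabel) : i = i').
Qed.

Section FiberPermIsog.
Variables (T T' : finType) (U : eqType) (b : T -> U) (b' : T' -> U).
Variables (e : T -> T') (e' : T' -> T).
Hypotheses (eK : cancel e e') (e'K : cancel e' e) (b'e : forall x, b' (e x) = b x).

Lemma conj_perm_proof (g : {perm T}) : injective (e \o g \o e').
Proof. exact: inj_comp (inj_comp (can_inj eK) (@perm_inj _ g)) (can_inj e'K). Qed.

Definition conj_perm (g : {perm T}) : {perm T'} := perm (@conj_perm_proof g).

Lemma conj_permE g y : conj_perm g y = e (g (e' y)).
Proof. by rewrite permE. Qed.

Lemma conj_permM : {in setT &, {morph conj_perm : g h / g * h}}.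
Proof. by move=> g h _ _; apply/permP => y; rewrite !permM !conj_permE eK permM. Qed.

Canonical conj_perm_morphism := Morphism conj_permM.

Lemma injm_conj_perm : 'injm conj_perm_morphism.
Proof.
apply/injmP => g h _ _ /= /permP eq_gh; apply/permP => x.
by apply: (can_inj eK); have := eq_gh (e x); rewrite !conj_permE eK.
Qed.

Lemma conj_perm_fiber : conj_perm_morphism @* fiber_perm b = fiber_perm b'.
Proof.
rewrite morphimEsub ?subsetT //; apply/setP => s; apply/imsetP/idP.
  case=> g /fiber_permP g_b ->; apply/fiber_permP => y.
  by rewrite conj_permE b'e g_b -b'e e'K.
move=> /fiber_permP s_b'.
have s_inj : injective (e' \o s \o e).
  exact: inj_comp (inj_comp (can_inj e'K) (@perm_inj _ s)) (can_inj eK).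
exists (perm s_inj); last by apply/permP => y; rewrite conj_permE permE /= !e'K.
by apply/fiber_permP => x; rewrite permE /= -b'e e'K s_b' b'e.
Qed.

Lemma fiber_perm_isog : fiber_perm b \isog fiber_perm b'.
Proof. by rewrite -conj_perm_fiber sub_isog ?subsetT ?injm_conj_perm. Qed.

End FiberPermIsog.

Lemma fiber_perm_isog_card (U T T' : finType) (b : T -> U) (b' : T' -> U) :
  (forall u, #|fiber b u| = #|fiber b' u|) -> fiber_perm b \isog fiber_perm b'.
Proof.
move=> card_b; have [e e_inj b'e] := fiber_transport (@inj_id U) card_b.
have [e' e'_inj _] := fiber_transport (@inj_id U) (fun u => esym (card_b u)).
have [e1 eK e1K] := inj_card_bij e_inj (leq_card e' e'_inj).
exact: fiber_perm_isog eK e1K b'e.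
Qed.

Section TagPerm.
Variables (U : finType) (T_ : U -> finType).
Local Notation S := {u : U & T_ u}.

Lemma card_fiber_tag u : #|fiber (@tag U T_) u| = #|T_ u|.
Proof.
have -> : fiber (@tag U T_) u = [set Tagged T_ x | x : T_ u].
  apply/setP => -[u' x]; rewrite inE; apply/eqP/imsetP => [/= eq_u | [y _ ->] //].
  by subst u'; exists x.
by rewrite card_imset ?cardsT //; apply: eq_from_Tagged.
Qed.

Lemma Tagged_tagged_as u (x : T_ u) (w : S) :
  tag w = u -> Tagged T_ (tagged_as (Tagged T_ x) w) = w.
Proof. by case: w => u' y /= eq_u; subst u'; rewrite tagged_asE. Qed.

Lemma sum_perm_proof (F : {dffun forall u, {perm T_ u}}) :
  injective (fun y : S => Tagged T_ (F (tag y) (tagged y))).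
Proof.
move=> [u x] [u' x'] /= eq_F; have eq_u : u = u' := congr1 (@tag _ _) eq_F.
by subst u'; rewrite (perm_inj (eq_from_Tagged eq_F)).
Qed.

Definition sum_perm (F : {dffun forall u, {perm T_ u}}) : {perm S} :=
  perm (@sum_perm_proof F).

Lemma sum_permE F u (x : T_ u) : sum_perm F (Tagged T_ x) = Tagged T_ (F u x).
Proof. by rewrite permE. Qed.

Lemma sum_perm_inj : injective sum_perm.
Proof.
move=> F G /permP eq_FG; apply/ffunP => u; apply/permP => x.
by apply: (@eq_from_Tagged _ T_ u); rewrite -!sum_permE eq_FG.
Qed.

Lemma fiber_perm_tagE : fiber_perm (@tag U T_) = [set sum_perm F | F in setT].
Proof.
apply/setP => s; apply/idP/imsetP => [/fiber_permP s_tag | [F _ ->]]; last first.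
  by apply/fiber_permP => -[u x]; rewrite sum_permE.
have s_tag_at u (x : T_ u) : tag (s (Tagged T_ x)) = u by rewrite s_tag.
have restr_inj u :
    injective (fun x : T_ u => tagged_as (Tagged T_ x) (s (Tagged T_ x)) : T_ u).
  move=> x y /(congr1 (Tagged T_)); rewrite !Tagged_tagged_as ?s_tag_at //.
  by move/perm_inj; apply: eq_from_Tagged.
exists [ffun u => perm (@restr_inj u)] => //; apply/permP => -[u x].
by rewrite sum_permE ffunE permE Tagged_tagged_as ?s_tag_at.
Qed.

Lemma card_fiber_perm_tag : #|fiber_perm (@tag U T_)| = (\prod_u #|T_ u|`!)%N.
Proof.
rewrite fiber_perm_tagE card_imset; last exact: sum_perm_inj.
rewrite cardsT card_dep_ffun foldrE big_map big_enum /=.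
apply: eq_bigr => u _; rewrite -(@cardsT (T_ u)) -card_perm.
by apply: eq_card => s; apply/idP/idP => _ //; apply/subsetP => x; rewrite inE.
Qed.

End TagPerm.
Section Complex.
Variables (n t : nat) (f : 'I_n.+1 -> 'I_t).
Local Notation vert := (vert n t).

Definition blk (v : vert) : 'I_t := match v with inl i => f i | inr j => j end.
Local Notation block := (fiber blk).

Lemma blk_yv c i : blk (yv f c i) = f i.
Proof. by rewrite /yv; case: (c i). Qed.

Lemma card_block j : #|block j| = (part_size f j).+1.
Proof.
have -> : block j = inr j |: [set inl i | i in [set i | f i == j]].
  apply/setP => -[i|j']; rewrite !inE; first by rewrite mem_imset ?inE //; move=> ? ? [].
  by apply/eqP/orP => /= [->|[/eqP[] //|/imsetP[] //]]; left.
rewrite cardsU1 card_imset; last by move=> ? ? [].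
by case: imsetP => // -[].
Qed.

Lemma block_not_sub_nface F j : is_nface f F -> ~~ (block j \subset F).
Proof.
case/existsP=> c /andP[/injectiveP yv_inj /eqP ->]; apply/negP => /subsetP blockF.
have /blockF/imsetP[i _] := mem_fiber blk (inr j : vert).
rewrite /yv; case ci: (c i) => // -[fi].
have : inl i \in block j by rewrite inE /= fi.
move/blockF/imsetP=> [i' _]; rewrite /yv; case ci': (c i') => // -[eq_i'].
by rewrite -eq_i' ci in ci'.
Qed.

Lemma is_faceE S : is_face f S = (S != set0) && [forall j, ~~ (block j \subset S)].
Proof.
rewrite /is_face; congr (_ && _); apply/existsP/forallP.
  case=> F /andP[nfF SF] j; apply: contra (block_not_sub_nface j nfF).
  by move/subset_trans; apply.
move=> no_block.
(* p_j, when it lies in S, takes the place of a vertex of P_j missing from S *)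
pose missing j := [pick i | (f i == j) && (inl i \notin S)].
have missingP j : inr j \in S -> exists2 i, missing j = Some i & f i = j.
  move=> Sj; rewrite /missing; case: pickP => [i /andP[/eqP fi _] | none]; first by exists i.
  case/subsetPn: (no_block j) => -[i|j'] /[!inE] /eqP /= eq_j; last by rewrite eq_j Sj.
  by move=> Si; have := none i; rewrite eq_j eqxx Si.
pose c := [ffun i => (inr (f i) \in S) && (missing (f i) == Some i)].
exists [set yv f c i | i : 'I_n.+1]; apply/andP; split.
  apply/existsP; exists c; rewrite eqxx andbT; apply/injectiveP => i i'.
  rewrite /yv !ffunE.
  case: ifP => [/andP[_ /eqP mi] | _]; case: ifP => [/andP[_ /eqP mi'] | _] //; try by case.
  by case=> eq_f; rewrite eq_f mi' in mi; case: mi.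
apply/subsetP => -[i|j] Sv; apply/imsetP.
  exists i => //; rewrite /yv ffunE.
  case: (missing (f i) =P Some i) => [|_]; last by rewrite andbF.
  by rewrite /missing; case: pickP => // i' /andP[_ /negP Si'] [eq_i]; rewrite -eq_i in Sv.
have [i mi fi] := missingP j Sv.
by exists i => //; rewrite /yv ffunE fi Sv mi eqxx.
Qed.

Lemma is_face_relabel (g : {perm vert}) (tau : {perm 'I_t}) (S : {set vert}) :
  (forall v, blk (g v) = tau (blk v)) -> is_face f (g @: S) = is_face f S.
Proof.
move=> g_tau; rewrite !is_faceE imset_eq0; congr (_ && _).
have g_block j : g @: block j = block (tau j).
  apply/setP => v; rewrite -[v](permKV g) mem_imset ?inE ?g_tau ?(inj_eq perm_inj) //.
  exact: perm_inj.
apply/forallP/forallP => no_block j.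
  by rewrite -(perm_imsetS g) g_block.
by rewrite -(permKV tau j) -g_block perm_imsetS.
Qed.

Lemma tperm_block_CoxK v w : blk v = blk w -> tperm v w \in CoxK f.
Proof.
have genK i : gen f i \in CoxK f by apply/mem_gen/imset_f.
have tperm_inl i i' : f i = f i' -> tperm (inl i : vert) (inl i') \in CoxK f.
  move=> eq_f; have [-> | ne_ii'] := eqVneq i i'; first by rewrite tperm1 group1.
  suff -> : tperm (inl i : vert) (inl i') = gen f i ^ gen f i' by rewrite groupJ.
  by rewrite /gen tpermJ eq_f tpermR tpermD // (inj_eq (@inl_inj _ _)) eq_sym.
case: v => [i|j]; case: w => [i'|j'] /= eq_blk.
- exact: tperm_inl.
- by rewrite -eq_blk; apply: genK.
- by rewrite tpermC eq_blk; apply: genK.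
- by rewrite eq_blk tperm1 group1.
Qed.

Lemma CoxK_fiber_perm : CoxK f = fiber_perm blk.
Proof.
apply/eqP; rewrite eqEsubset (fiber_perm_sub tperm_block_CoxK) andbT.
rewrite gen_subG; apply/subsetP => _ /imsetP[i _ ->].
by apply/fiber_permP => v; rewrite /gen; case: tpermP => // ->.
Qed.

Lemma AutKP (g : {perm vert}) :
  reflect (forall S : {set vert}, is_face f (g @: S) = is_face f S) (g \in AutK f).
Proof. by rewrite inE; apply: (iffP forallP) => g_face S; apply/eqP. Qed.

Lemma AutKV g : g \in AutK f -> g^-1 \in AutK f.
Proof.
move/AutKP=> g_face; apply/AutKP => S.
by rewrite -g_face -perm_imsetM mulVg (eq_imset _ (@perm1 _)) imset_id.
Qed.

Lemma fiber_perm_sub_AutK : fiber_perm blk \subset AutK f.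
Proof.
apply/subsetP => g /fiber_permP g_blk; apply/AutKP => S.
by apply: (is_face_relabel (tau := 1)) => v; rewrite perm1.
Qed.

Lemma block_not_face j : is_face f (block j) = false.
Proof.
rewrite is_faceE; apply/negbTE; rewrite negb_and; apply/orP; right.
by apply/forallPn; exists j; rewrite negbK.
Qed.

Lemma AutK_block_sub g j : g \in AutK f -> exists k, block k \subset g @: block j.
Proof.
have block_neq0 : block j != set0.
  by apply/set0Pn; exists (inr j); apply: (mem_fiber blk (inr j)).
move/AutKP/(_ (block j)); rewrite block_not_face is_faceE imset_eq0 block_neq0 /=.
by move/negbT/forallPn=> [k]; rewrite negbK; exists k.
Qed.

Lemma AutK_block_image g j : g \in AutK f -> exists k, g @: block j = block k.
Proof.
move=> gA; have [k sub_k] := AutK_block_sub j gA.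
have [l sub_l] := AutK_block_sub k (AutKV gA).
have sub_lj : block l \subset block j.
  by rewrite -[block j](perm_imsetK g) (subset_trans sub_l) ?imsetS.
have eq_lj : l = j.
  by apply/eqP; have := subsetP sub_lj _ (mem_fiber blk (inr l)); rewrite inE.
exists k; apply/eqP; rewrite eqEsubset sub_k andbT.
by rewrite -(perm_imsetS g^-1) perm_imsetK -eq_lj.
Qed.

Lemma AutK_sub_fiber_perm : injective (part_size f) -> AutK f \subset fiber_perm blk.
Proof.
move=> size_inj; apply/subsetP => g gA.
have g_block j : g @: block j = block j.
  have [k eq_k] := AutK_block_image j gA.
  have : #|block k| = #|block j| by rewrite -eq_k card_imset //; apply: perm_inj.
  by rewrite !card_block => -[/size_inj eq_kj]; rewrite eq_k eq_kj.
apply/fiber_permP => v; apply/eqP.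
by have := imset_f g (mem_fiber blk v); rewrite g_block inE.
Qed.

Lemma AutK_swap_blocks j k : j != k -> part_size f j = part_size f k ->
  exists2 g, g \in AutK f & g \notin fiber_perm blk.
Proof.
move=> ne_jk eq_size.
have card_swap u : #|block u| = #|block (tperm j k u)|.
  by rewrite !card_block; case: tpermP => // ->; rewrite eq_size.
have [e e_inj e_blk] := fiber_transport (@perm_inj _ (tperm j k)) card_swap.
exists (perm e_inj).
  by apply/AutKP => S; apply: is_face_relabel => v; rewrite permE e_blk.
apply/fiber_permP => /(_ (inr j)); rewrite permE e_blk /= tpermL.
by move/eqP; rewrite eq_sym (negbTE ne_jk).
Qed.

Definition base_facet : {set vert} := [set inl i | i : 'I_n.+1].

Lemma nface_base_image S : is_nface f S ->
  exists2 g, g \in fiber_perm blk & g @: base_facet = S.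
Proof.
case/existsP=> c /andP[/injectiveP yv_inj /eqP ->].
(* h exchanges i and p_(f i) whenever y_i = p_(f i), and fixes the rest *)
pose h (v : vert) : vert := match v with
  | inl i => yv f c i
  | inr j => if [pick i | c i && (f i == j)] is Some i then inl i else inr j end.
have hK : involutive h.
  case=> [i|j] /=.
    rewrite /yv; case ci: (c i) => /=; last by rewrite /yv ci.
    case: pickP => [i' /andP[ci' /eqP fi'] | /(_ i)]; last by rewrite ci eqxx.
    by congr inl; apply: yv_inj; rewrite /yv ci ci' fi'.
  case: (pickP (fun i => c i && (f i == j))) => [i /andP[ci /eqP fi] | none] /=.
    by rewrite /yv ci fi.
  by case: pickP => // i; rewrite none.
exists (perm (can_inj hK)).
  apply/fiber_permP => -[i|j]; rewrite permE /=; first exact: blk_yv.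
  by case: pickP => [i /andP[_ /eqP]|].
by rewrite -imset_comp; apply: eq_imset => i; rewrite /= permE.
Qed.

Lemma nface_trans S T : is_nface f S -> is_nface f T ->
  exists2 g, g \in fiber_perm blk & g @: S = T.
Proof.
move=> /nface_base_image[g gB <-] /nface_base_image[h hB <-].
by exists (g^-1 * h); rewrite ?groupM ?groupV // perm_imsetM perm_imsetK.
Qed.

Lemma card_block_tag j :
  #|block j| = #|fiber (@tag _ (fun j => 'I_(part_size f j).+1)) j|.
Proof. by rewrite card_block card_fiber_tag card_ord. Qed.

Lemma fiber_perm_isog_ProdSym : fiber_perm blk \isog ProdSym f.
Proof. exact: fiber_perm_isog_card card_block_tag. Qed.

Lemma card_fiber_perm_blk :
  #|fiber_perm blk| = (\prod_(j < t) (part_size f j).+1`!)%N.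
Proof.
rewrite (card_isog (fiber_perm_isog_card card_block_tag)) card_fiber_perm_tag.
by apply: eq_bigr => j _; rewrite card_ord.
Qed.

End Complex.

Close Scope group_scope.

Theorem proposition2p8 (n t : nat) (f : 'I_n.+1 -> 'I_t) :
  2 <= n ->
  (forall j : 'I_t, exists i : 'I_n.+1, f i = j) ->
  [/\ CoxK f \isog ProdSym f,
      #|CoxK f| = \prod_(j < t) (part_size f j).+1`!,
      (CoxK f = AutK f <->
         (forall j k : 'I_t, j != k -> part_size f j != part_size f k)) &
      (forall S T : {set vert n t}, is_nface f S -> is_nface f T ->
         exists2 g, g \in CoxK f & g @: S = T)].
Proof.
move=> _ _; rewrite CoxK_fiber_perm; split.
- exact: fiber_perm_isog_ProdSym.
- exact: card_fiber_perm_blk.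
- split=> [Cox_Aut j k ne_jk | sizes_distinct].
    apply/eqP => eq_size; have [g gA] := AutK_swap_blocks ne_jk eq_size.
    by rewrite Cox_Aut gA.
  apply/eqP; rewrite eqEsubset fiber_perm_sub_AutK AutK_sub_fiber_perm // => j k.
  by move/eqP; apply: contraTeq (sizes_distinct j k).
- exact: nface_trans.
Qed.
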